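(* Let $R$ be a commutative ring with unit, $\mathcal{P}$ a poset satisfying the descending chain condition, $i\in\mathcal{P}$, and $F\colon\mathcal{P}\to R\text{-mod}$ a functor which is pseudo-projective at $i$. Let $x=\oplus_{j<i}x_j\in\bigoplus_{j<i}F(j)$ satisfy $\sum_{j<i}F(j<i)(x_j)=0$. Then there is a sequence $\{x^n\}_{n\ge0}$, $x^n=\oplus_{j<i}x^n_j\in\bigoplus_{j<i}F(j)$, with $x^0=x$, such that for every $n\ge0$: $\sum_{j<i}F(j<i)(x^n_j)=0$; $x^{n+1}-x^n=\sum_{k<j,\ j\in\max\operatorname{supp}(x^n)}\big(y_{k,j}\oplus -F(k<j)(y_{k,j})\big)$ for some elements $y_{k,j}\in F(k)$ (with $y_{k,j}$ placed in the summand $F(k)$ and $-F(k<j)(y_{k,j})$ in the summand $F(j)$); $[x^{n+1}]=[x^n]$ in $\operatorname{colim}_{\mathcal{P}_{<i}}F$; and $\operatorname{supp}(x^{n+1})<\operatorname{supp}(x^n)$. In addition, there exists $N>0$ such that $x^n_j=0$ for all $j<i$ whenever $n\ge N$.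
   Context: DCC: no infinite strictly descending chains. $F(j<i)$ is the image of the arrow $j\to i$, $F(i<i)=1$. For $x=\oplus_j x_j$, $\operatorname{supp}(x)=\{j: x_j\ne0\}$; $[x]$ is the class of $x$ in the colimit. For subsets $I,J$ of $\mathcal{P}$, $J<I$ means every element of $J$ is strictly smaller than some element of $I$. $\max J$ is the set of maximal elements of $J$. $\operatorname{Im}_F(j)=\sum_{k<j}\operatorname{Im}F(k<j)$. $F$ is pseudo-projective at $i$ if for every finite $J\subset\mathcal{P}_{\le i}$ and every $\oplus_{j\in J}x_j\in\bigoplus_{j\in J}F(j)$ with $\sum_{j\in J}F(j<i)(x_j)=0$, one has $x_j\in\operatorname{Im}_F(j)$ for all $j\in\max J$. *)

From HB Require Import structures.
From mathcomp Require Import all_boot all_order all_algebra.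
From mathcomp Require Import finmap.
From Stdlib Require Lists.List.
Unset Printing Implicit Defensive.
Import Order.TTheory GRing.Theory.
Local Open Scope ring_scope.
Local Open Scope order_scope.


Definition dcc (d : Order.disp_t) (P : porderType d) : Prop :=
  forall f : nat -> P, ~ (forall n, f n.+1 < f n).

Record pfunctor (R : comPzRingType) (d : Order.disp_t) (P : porderType d) := PFunctor {
  obj : P -> lmodType R;
  mor : forall j k : P, j <= k -> obj j -> obj k;
  morDZ : forall j k (h : j <= k) (a : R) (u v : obj j),
      mor j k h (a *: u + v) = a *: mor j k h u + mor j k h v;
  mor_id : forall j (h : j <= j) (u : obj j), mor j j h u = u;
  mor_comp : forall j k l (hjk : j <= k) (hkl : k <= l) (hjl : j <= l) (u : obj j),
      mor j l hjl u = mor k l hkl (mor j k hjk u)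
}.

Arguments pfunctor R {d} P.
Arguments obj {R d P} p j : rename.
Arguments mor {R d P} p {j k} h v : rename.

Section Defs.
Variables (R : comPzRingType) (d : Order.disp_t) (P : porderType d) (F : pfunctor R P).

(* F(j<k) applied to v, extended by 0 when j <= k fails. *)
Definition morb (j k : P) (v : obj F j) : obj F k :=
  (match (j <= k)%O as b return ((j <= k)%O = b -> obj F k) with
   | true => fun h => mor F h v
   | false => fun _ => 0
   end) (erefl _).

Definition inj (k l : P) (y : obj F k) : obj F l :=
  match k =P l with
  | ReflectT e => eq_rect k (obj F) y l e
  | ReflectF _ => 0
  end.

Definition elem (k j : P) (y : obj F k) : forall l, obj F l :=
  fun l => inj k l y - inj j l (morb k j y).

Definition triple := {kj : P * P & obj F kj.1}.

Definition telem (t : triple) : forall l, obj F l :=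
  elem (tag t).1 (tag t).2 (tagged t).

(* Elements of the direct sum (+)_{j<i} F(j): a function j |-> x_j together
   with a finite set containing its support, all of whose elements are < i. *)
Record dsum (i : P) := DSum {
  dsupp : {fset P};
  dval : forall j, obj F j;
  dval_supp : forall j, dval j != 0 -> j \in dsupp;
  dsupp_lt : forall j, j \in dsupp -> j < i
}.
Arguments dsupp {i} _.
Arguments dval {i} _ j.

Definition dsum_eval (i : P) (x : dsum i) : obj F i :=
  \sum_(j <- dsupp x) morb j i (dval x j).

Definition supp (i : P) (x : dsum i) (j : P) : Prop := dval x j != 0.

Definition is_max (J : P -> Prop) (j : P) : Prop :=
  J j /\ forall k, J k -> ~ (j < k).

Definition set_lt (J I : P -> Prop) : Prop :=
  forall j, J j -> exists k, I k /\ j < k.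

(* [x] = [x'] in colim_{P_{<i}} F, the colimit being the quotient of
   (+)_{j<i} F(j) by the submodule generated by y (+) -F(k<j)(y), k<j<i. *)
Definition colim_eq (i : P) (x x' : dsum i) : Prop :=
  exists ts : seq triple,
    (forall t, Stdlib.Lists.List.In t ts -> (tag t).1 < (tag t).2 /\ (tag t).2 < i) /\
    forall l, dval x l - dval x' l = \sum_(t <- ts) telem t l.

Definition inImF (j : P) (v : obj F j) : Prop :=
  exists ys : seq {k : P & obj F k},
    (forall t, Stdlib.Lists.List.In t ys -> tag t < j) /\
    v = \sum_(t <- ys) morb (tag t) j (tagged t).

Definition pseudo_projective (i : P) : Prop :=
  forall (J : {fset P}) (xJ : forall j, obj F j),
    (forall j, j \in J -> j <= i) ->
    \sum_(j <- J) morb j i (xJ j) = 0 ->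
    forall j, j \in J -> (forall k, k \in J -> ~ (j < k)) -> inImF j (xJ j).

End Defs.

Arguments morb {R d P} F j k v.
Arguments inj {R d P} F k l y.
Arguments elem {R d P} F k j y l.
Arguments triple {R d P} F.
Arguments telem {R d P F} t l.
Arguments dsum {R d P} F i.
Arguments DSum {R d P F i} dsupp dval dval_supp dsupp_lt.
Arguments dsupp {R d P F i} _.
Arguments dval {R d P F i} _ j.
Arguments dsum_eval {R d P F i} x.
Arguments supp {R d P F i} x j.
Arguments is_max {d P} J j.
Arguments set_lt {d P} J I.
Arguments colim_eq {R d P F i} x x'.
Arguments inImF {R d P F j} v.
Arguments pseudo_projective {R d P} F i.
Arguments dcc {d} P.

(* Pseudo-projectivity at i puts every maximal component x_j of a relation x
   (that is, sum_j F(j<i) x_j = 0) into Im_F(j): x_j = sum_k F(k<j) y_{k,j}.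
   Adding the colimit relations y_{k,j} (+) -F(k<j) y_{k,j} to x kills these
   components and creates new ones only at the indices k < j; so neither the
   evaluation in F(i) nor the class in the colimit changes, while the support
   moves strictly down.  The iteration stops because, in a poset with DCC, the
   relation "J is nonempty and every element of J lies strictly below an
   element of I" is well founded on finite sets: accessibility is preserved by
   finite unions, and {a} is accessible by well-founded induction on a. *)

From HB Require Import structures.
From mathcomp Require Import all_boot all_order all_algebra.
From mathcomp Require Import finmap.
From Stdlib Require Lists.List.
From Stdlib Require Import Classical ClassicalEpsilon.
Import Order.TTheory GRing.Theory.
Local Open Scope ring_scope.
Local Open Scope order_scope.

Lemma In_mem_map {T : Type} {U : eqType} (f : T -> U) {s : seq T} {t : T} :
  List.In t s -> f t \in map f s.
Proof. by elim: s => //= t' s IH [->|/IH]; rewrite inE ?eqxx // => ->; rewrite orbT. Qed.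

Lemma mem_map_In {T : Type} {U : eqType} {f : T -> U} {s : seq T} {u : U} :
  u \in map f s -> exists2 t, List.In t s & u = f t.
Proof.
elim: s => //= t s IH; rewrite inE => /orP [/eqP ->|/IH [t' st' ->]].
  by exists t => //; left.
by exists t' => //; right.
Qed.

Lemma big1_In (T : Type) (V : nmodType) (s : seq T) (f : T -> V) :
  (forall t, List.In t s -> f t = 0) -> \sum_(t <- s) f t = 0.
Proof.
elim: s => [|t s IH] f0; first by rewrite big_nil.
by rewrite big_cons f0 ?add0r ?IH // => [u su|]; [apply: f0; right | left].
Qed.

Lemma sumr_neq0_In (T : Type) (V : nmodType) (s : seq T) (f : T -> V) :
  \sum_(t <- s) f t != 0 -> exists2 t, List.In t s & f t != 0.
Proof.
move=> /eqP nz; apply: NNPP => noWitness; apply: nz.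
by apply: big1_In => t st; apply/eqP; apply: contraT => ft; case: noWitness; exists t.
Qed.

Lemma dependent_choice {T : Type} {Q : T -> Prop} {rel : T -> T -> Prop} :
  (forall x, Q x -> exists y, Q y /\ rel x y) ->
  forall x, Q x -> exists xs : nat -> T,
    xs 0%N = x /\ forall n, Q (xs n) /\ rel (xs n) (xs n.+1).
Proof.
move=> step x Qx.
have next (y : {y | Q y}) : {z : {z | Q z} | rel (sval y) (sval z)}.
  have [z [Qz yz]] := constructive_indefinite_description _ (step _ (svalP y)).
  by exists (exist _ z Qz).
exists (fun n => sval (iter n (fun y => sval (next y)) (exist _ x Qx))).
split=> // n; split; first exact: svalP.
exact: svalP (next _).
Qed.

Section Domination.
Context {d : Order.disp_t} {P : porderType d}.
Local Open Scope fset_scope.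

Lemma dcc_wf : dcc P -> well_founded (fun a b : P => a < b).
Proof.
move=> noChain a; apply: NNPP => accN.
pose A := {b : P | ~ Acc (fun a b : P => a < b) b}.
have next (b : A) : {c : A | sval c < sval b}.
  apply: constructive_indefinite_description; case: b => b accNb /=.
  apply: NNPP => noLower; apply: accNb; constructor => c cb.
  by apply: NNPP => accNc; apply: noLower; exists (exist _ c accNc).
apply: (noChain (fun n => sval (iter n (fun b => sval (next b)) (exist _ a accN)))).
move=> n; exact: svalP (next _).
Qed.

Definition dominated (J I : {fset P}) : bool := all (fun j => has (fun k => j < k) I) J.

Lemma dominatedP J I :
  reflect (forall j, j \in J -> exists2 k, k \in I & j < k) (dominated J I).
Proof. by apply: (iffP allP) => dom j /dom /hasP. Qed.

Lemma dominated_trans {J K I : {fset P}} : dominated J K -> dominated K I -> dominated J I.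
Proof.
move=> /dominatedP JK /dominatedP KI; apply/dominatedP => j /JK [k /KI [l Il kl] jk].
by exists l; last exact: lt_trans jk kl.
Qed.

Lemma dominated_fsubr {J K I : {fset P}} : K `<=` I -> dominated J K -> dominated J I.
Proof.
move=> /fsubsetP KI /dominatedP JK; apply/dominatedP => j /JK [k /KI].
by exists k.
Qed.

Lemma dominated_fset0 J : dominated J fset0 -> J = fset0.
Proof.
move=> /dominatedP J0; apply/eqP; apply: contraT => /fset0Pn [j /J0 [k]].
by rewrite in_fset0.
Qed.

(* Nonemptiness is needed: fset0 is dominated by itself. *)
Local Notation dom_lt := (fun J I : {fset P} => (J != fset0) && dominated J I).

Lemma Acc_fset0 : Acc dom_lt fset0.
Proof. by constructor => J /andP [nzJ /dominated_fset0 J0]; rewrite J0 eqxx in nzJ. Qed.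

Lemma Acc_dominated {J I : {fset P}} : dominated J I -> Acc dom_lt I -> Acc dom_lt J.
Proof.
move=> JI [accI]; constructor => K /andP [nzK KJ]; apply: accI.
by rewrite nzK (dominated_trans KJ JI).
Qed.

Lemma Acc_fsubset J I : J `<=` I -> Acc dom_lt I -> Acc dom_lt J.
Proof.
move=> JI [accI]; constructor => K /andP [nzK KJ]; apply: accI.
by rewrite nzK (dominated_fsubr JI KJ).
Qed.

Lemma Acc_fsetU I1 I2 : Acc dom_lt I1 -> Acc dom_lt I2 -> Acc dom_lt (I1 `|` I2).
Proof.
(* Only I1 needs an induction: the part of J below I2 is accessible since I2 is. *)
move=> acc1; elim: acc1 I2 => {}I1 _ IH I2 acc2; constructor => J /andP [_ /dominatedP JI].
pose below (I : {fset P}) := [fset j in J | has (fun k => j < k) I].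
have dom_below (I : {fset P}) : dominated (below I) I.
  by apply/allP => j; rewrite !inE => /andP [].
apply: (Acc_fsubset _ (below I1 `|` below I2)).
  apply/fsubsetP => j Jj; have [k] := JI j Jj.
  rewrite !inE Jj /= => /orP [] Ik jk; apply/orP; [left | right]; apply/hasP; by exists k.
have accJ2 := Acc_dominated (dom_below I2) acc2.
have [->|nz1] := eqVneq (below I1) fset0; first by rewrite fset0U.
by apply: IH => //; rewrite nz1 dom_below.
Qed.

Lemma Acc_fset_elems (J : {fset P}) :
  (forall j, j \in J -> Acc dom_lt [fset j]) -> Acc dom_lt J.
Proof.
suff acc_sub (s : seq P) : (forall j, j \in s -> Acc dom_lt [fset j]) ->
    forall K : {fset P}, {subset K <= s} -> Acc dom_lt K.
  by move=> accJ; apply: acc_sub accJ _ _.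
elim: s => [|a s IH] acc K Ks.
  by apply: (Acc_fsubset _ _ _ Acc_fset0); apply/fsubsetP => j /Ks.
apply: (Acc_fsubset _ ([fset a] `|` [fset j in K | j \in s])).
  by apply/fsubsetP => j Kj; move: (Ks j Kj); rewrite !inE Kj => /orP [] ->; rewrite ?orbT.
apply: Acc_fsetU; first by apply: acc; rewrite mem_head.
by apply: IH => [j sj|j]; [apply: acc; rewrite inE sj orbT | rewrite !inE => /andP []].
Qed.

Lemma dom_lt_wf : dcc P -> well_founded dom_lt.
Proof.
move=> /dcc_wf wf.
have acc1 (a : P) : Acc dom_lt [fset a].
  elim: (wf a) => {}a _ IH; constructor => J /andP [_ /dominatedP Ja].
  by apply: Acc_fset_elems => j /Ja [k]; rewrite inE => /eqP -> /IH.
by move=> J; apply: Acc_fset_elems.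
Qed.

Lemma dominated_chain_vanishes (S : nat -> {fset P}) : dcc P ->
  (forall n, dominated (S n.+1) (S n)) -> exists N, forall n, (N <= n)%N -> S n = fset0.
Proof.
move=> /dom_lt_wf wf dom.
suff [N SN] : exists N, S N = fset0.
  exists N => n /subnK <-; elim: (n - N)%N => [|m IH]; first by rewrite add0n.
  by rewrite addSn; apply: dominated_fset0; rewrite -IH.
have [I S0] : {I | S 0%N = I} by exists (S 0%N).
elim: (wf I) S S0 dom => {}I _ IH S S0 dom.
have [S1|nz1] := eqVneq (S 1%N) fset0; first by exists 1%N.
have [|N SN] := IH (S 1%N) _ (fun n => S n.+1) erefl (fun n => dom n.+1).
  by rewrite -S0 nz1 dom.
by exists N.+1.
Qed.

End Domination.

Section FunctorAlgebra.
Context {R : comPzRingType} {d : Order.disp_t} {P : porderType d} (F : pfunctor R P).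

Lemma morB {j k : P} (h : j <= k) (u v : obj F j) :
  mor F h (u - v) = mor F h u - mor F h v.
Proof.
have morD (u' v' : obj F j) : mor F h (u' + v') = mor F h u' + mor F h v'.
  by rewrite -[u' in LHS]scale1r morDZ scale1r.
by apply: (addIr (mor F h v)); rewrite -morD !subrK.
Qed.

Lemma morbE {j k : P} (h : j <= k) (v : obj F j) : morb F j k v = mor F h v.
Proof.
rewrite /morb; move: (erefl (j <= k)); case: {2 3}(j <= k) => e.
  by rewrite (bool_irrelevance e h).
by rewrite h in e.
Qed.

Lemma morbNE {j k : P} (v : obj F j) : ~~ (j <= k) -> morb F j k v = 0.
Proof.
move=> /negbTE nh; rewrite /morb; move: (erefl (j <= k)).
by case: {2 3}(j <= k) => // e; rewrite e in nh.
Qed.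

Lemma morbB (j k : P) : {morph morb F j k : u v / u - v}.
Proof.
move=> u v; have [h|h] := boolP (j <= k); first by rewrite !(morbE h) morB.
by rewrite !morbNE ?subr0.
Qed.

HB.instance Definition _ (j k : P) :=
  GRing.isZmodMorphism.Build (obj F j) (obj F k) (morb F j k) (morbB j k).

Lemma morb_comp (k j l : P) (y : obj F k) : k < j -> j < l ->
  morb F k l y = morb F j l (morb F k j y).
Proof.
move=> kj jl; have kl := ltW (lt_trans kj jl).
by rewrite (morbE kl) (morbE (ltW jl)) (morbE (ltW kj)) -mor_comp.
Qed.

Lemma inj_id (k : P) (y : obj F k) : inj F k k y = y.
Proof. by rewrite /inj; case: eqP => // e; rewrite (eq_irrelevance e erefl). Qed.

Lemma inj_neq (k l : P) (y : obj F k) : k != l -> inj F k l y = 0.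
Proof. by rewrite /inj; case: eqP. Qed.

Lemma sum_morb_inj (i k : P) (s : seq P) (y : obj F k) : uniq s -> k \in s ->
  \sum_(l <- s) morb F l i (inj F k l y) = morb F k i y.
Proof.
move=> us ks; rewrite (bigD1_seq k) //= inj_id big1 ?addr0 // => l lk.
by rewrite inj_neq ?raddf0 // eq_sym.
Qed.

End FunctorAlgebra.

Arguments dval_supp {R d P F i} _ [j] _.
Arguments dsupp_lt {R d P F i} _ [j] _.

Section DirectSum.
Context {R : comPzRingType} {d : Order.disp_t} {P : porderType d} {F : pfunctor R P} {i : P}.
Local Open Scope fset_scope.

Lemma dsum_evalE {x : dsum F i} {A : {fset P}} :
  (forall j, dval x j != 0 -> j \in A) ->
  dsum_eval x = \sum_(j <- A) morb F j i (dval x j).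
Proof.
move=> suppA.
have vanish (B : {fset P}) : (forall j, dval x j != 0 -> j \in B) ->
    forall j, j \in dsupp x `|` A -> j \notin B -> morb F j i (dval x j) = 0.
  move=> suppB j _ nB; suff /eqP -> : dval x j == 0 by rewrite raddf0.
  by apply: contraNT nB => /suppB.
rewrite /dsum_eval (big_fset_incl _ (fsubsetUl _ A) (vanish _ (dval_supp x))).
by rewrite (big_fset_incl _ (fsubsetUr (dsupp x) A) (vanish _ suppA)).
Qed.

Definition fsupp (x : dsum F i) : {fset P} := [fset j in dsupp x | dval x j != 0].

Lemma in_fsupp x j : (j \in fsupp x) = (dval x j != 0).
Proof. by rewrite !inE andb_idl // => /dval_supp. Qed.

Lemma fsupp_lt x j : j \in fsupp x -> j < i.
Proof. by rewrite in_fsupp => /dval_supp /dsupp_lt. Qed.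

Lemma fsupp_eq0 x : fsupp x = fset0 -> forall j, dval x j = 0.
Proof. by move=> x0 j; apply/eqP; apply: contraT; rewrite -in_fsupp x0. Qed.

Lemma set_lt_dominated {x x' : dsum F i} :
  set_lt (supp x') (supp x) -> dominated (fsupp x') (fsupp x).
Proof.
move=> lt_x'x; apply/dominatedP => j; rewrite in_fsupp => /lt_x'x [k [xk jk]].
by exists k; rewrite ?in_fsupp.
Qed.

Definition fmax (x : dsum F i) : {fset P} :=
  [fset j in fsupp x | all (fun k => ~~ (j < k)) (fsupp x)].

Lemma in_fmax x j :
  (j \in fmax x) = (dval x j != 0) && all (fun k => ~~ (j < k)) (fsupp x).
Proof. by rewrite -in_fsupp [in RHS]inE !inE. Qed.

Lemma fmaxP x j : reflect (is_max (supp x) j) (j \in fmax x).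
Proof.
rewrite in_fmax; apply: (iffP andP) => [[xj /allP jmax]|[xj jmax]].
  by split=> // k xk; apply/negP/jmax; rewrite in_fsupp.
by split=> //; apply/allP => k; rewrite in_fsupp => /jmax /negP.
Qed.

Lemma fmax_lt x j : j \in fmax x -> j < i.
Proof. by move=> /fmaxP [/dval_supp /dsupp_lt]. Qed.

Lemma below_fmax x j : dval x j != 0 -> j \notin fmax x -> exists k, supp x k /\ j < k.
Proof.
move=> xj /fmaxP jmax; apply: NNPP => nabove; apply: jmax; split=> // k xk jk.
by apply: nabove; exists k.
Qed.

End DirectSum.

Section Relations.
Context {R : comPzRingType} {d : Order.disp_t} {P : porderType d} (F : pfunctor R P).

Definition telem_tgt (t : triple F) (l : P) : obj F l :=
  inj F (tag t).2 l (morb F (tag t).1 (tag t).2 (tagged t)).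

Lemma telemE (t : triple F) l : telem t l = inj F (tag t).1 l (tagged t) - telem_tgt t l.
Proof. by []. Qed.

Lemma telem_neq0 (t : triple F) l : telem t l != 0 -> l = (tag t).1 \/ l = (tag t).2.
Proof.
have [<-|k_l] := eqVneq (tag t).1 l; first by left.
have [<-|j_l] := eqVneq (tag t).2 l; first by right.
by rewrite telemE /telem_tgt !inj_neq // subrr eqxx.
Qed.

Lemma sum_morb_telem (i : P) (A : {fset P}) (t : triple F) :
  (tag t).1 < (tag t).2 -> (tag t).2 < i -> (tag t).1 \in A -> (tag t).2 \in A ->
  \sum_(l <- A) morb F l i (telem t l) = 0.
Proof.
move=> kj ji kA jA; under eq_bigr do rewrite telemE raddfB.
by rewrite sumrB !sum_morb_inj ?fset_uniq // -morb_comp ?subrr.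
Qed.

Lemma inImF_collect (f : forall j, obj F j) (L : seq P) : uniq L ->
  (forall j, j \in L -> inImF (f j)) ->
  exists ts : seq (triple F),
    (forall t, List.In t ts -> (tag t).1 < (tag t).2 /\ (tag t).2 \in L) /\
    (forall l, l \in L -> f l = \sum_(t <- ts) telem_tgt t l).
Proof.
elim: L => [|j L IH] /=; first by exists [::].
move=> /andP [jL uL] imL.
have [ts [ts_lt ts_sum]] := IH uL (fun j' L_j' => imL j' (mem_behead (s := j :: L) L_j')).
have [zs [zs_lt fj]] := imL j (mem_head _ _).
pose over_j (z : {k : P & obj F k}) : triple F :=
  existT (fun kj : P * P => obj F kj.1) (tag z, j) (tagged z).
exists (map over_j zs ++ ts); split.
  move=> t /List.in_app_iff [/List.in_map_iff [z [<- zs_z]]|ts_t].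
    by split; [exact: zs_lt | exact: mem_head].
  by have [kj Lj] := ts_lt t ts_t; rewrite inE Lj orbT.
move=> l; rewrite inE big_cat big_map /=.
have [->|lj] := eqVneq l j => /= [_|Ll].
  rewrite [X in (_ + X)%R]big1_In ?addr0 => [|t ts_t].
    by rewrite fj; apply: eq_bigr => z _; rewrite /telem_tgt inj_id.
  by rewrite /telem_tgt inj_neq //; apply: contraNneq jL => <-; exact: (ts_lt t ts_t).2.
rewrite big1 ?add0r ?ts_sum // => z _.
by rewrite /telem_tgt inj_neq // eq_sym.
Qed.

End Relations.

Section AddRelations.
Context {R : comPzRingType} {d : Order.disp_t} {P : porderType d} (F : pfunctor R P).
Variables (i : P) (x : dsum F i) (ts : seq (triple F)).
Hypothesis ts_lt : forall t, List.In t ts -> (tag t).1 < (tag t).2 /\ (tag t).2 < i.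

Definition addrel_supp : {fset P} :=
  (dsupp x `|` seq_fset tt (map (fun t => (tag t).1) ts ++ map (fun t => (tag t).2) ts))%fset.

Definition addrel_val (l : P) : obj F l := dval x l + \sum_(t <- ts) telem t l.

Lemma addrel_supp_src t : List.In t ts -> (tag t).1 \in addrel_supp.
Proof. by move=> ts_t; rewrite in_fsetU seq_fsetE mem_cat (In_mem_map _ ts_t) orbT. Qed.

Lemma addrel_supp_tgt t : List.In t ts -> (tag t).2 \in addrel_supp.
Proof. by move=> ts_t; rewrite in_fsetU seq_fsetE mem_cat (In_mem_map _ ts_t) !orbT. Qed.

Lemma addrel_val_supp l : addrel_val l != 0 -> l \in addrel_supp.
Proof.
have [x0|/dval_supp xl _] := eqVneq (dval x l) 0; last by rewrite in_fsetU xl.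
rewrite /addrel_val x0 add0r => /sumr_neq0_In [t ts_t /telem_neq0 [->|->]].
  exact: addrel_supp_src.
exact: addrel_supp_tgt.
Qed.

Lemma addrel_supp_lt l : l \in addrel_supp -> l < i.
Proof.
rewrite in_fsetU seq_fsetE mem_cat => /orP [/dsupp_lt //|/orP [] /mem_map_In [t ts_t ->]].
  by have [kj ji] := ts_lt t ts_t; exact: lt_trans kj ji.
by have [] := ts_lt t ts_t.
Qed.

Definition dsum_addrel : dsum F i :=
  DSum addrel_supp addrel_val addrel_val_supp addrel_supp_lt.

Lemma addrelB l : dval dsum_addrel l - dval x l = \sum_(t <- ts) telem t l.
Proof. by rewrite /= /addrel_val addrC addKr. Qed.

Lemma colim_eq_addrel : colim_eq dsum_addrel x.
Proof. by exists ts; split; [exact: ts_lt | exact: addrelB]. Qed.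

Lemma dsum_eval_addrel : dsum_eval dsum_addrel = dsum_eval x.
Proof.
have x_addrel j : dval x j != 0 -> j \in addrel_supp.
  by move=> /dval_supp xj; rewrite in_fsetU xj.
rewrite (dsum_evalE x_addrel) /dsum_eval /= /addrel_val.
under eq_bigr do rewrite raddfD raddf_sum.
rewrite big_split /= exchange_big /= [X in (_ + X)%R]big1_In ?addr0 // => t ts_t.
have [kj ji] := ts_lt t ts_t.
by apply: sum_morb_telem; rewrite ?addrel_supp_src ?addrel_supp_tgt.
Qed.

End AddRelations.

Section Reduction.
Context {R : comPzRingType} {d : Order.disp_t} {P : porderType d} {F : pfunctor R P} {i : P}.

Definition reduction_step (x x' : dsum F i) : Prop :=
  (exists ts : seq (triple F),
      (forall t, List.In t ts -> (tag t).1 < (tag t).2 /\ is_max (supp x) (tag t).2) /\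
      (forall l, dval x' l - dval x l = \sum_(t <- ts) telem t l)) /\
  colim_eq x' x /\ set_lt (supp x') (supp x).

Variables (x : dsum F i) (ts : seq (triple F)).
Hypothesis ts_max : forall t, List.In t ts -> (tag t).1 < (tag t).2 /\ (tag t).2 \in fmax x.
Hypothesis fmax_sum : forall l, l \in fmax x -> dval x l = \sum_(t <- ts) telem_tgt F t l.

Lemma fmax_triples_lt t : List.In t ts -> (tag t).1 < (tag t).2 /\ (tag t).2 < i.
Proof. by move=> /ts_max [kj /fmax_lt]. Qed.

Local Notation x' := (dsum_addrel F i x ts fmax_triples_lt).

Lemma addrel_fmax l : l \in fmax x -> dval x' l = 0.
Proof.
(* The target parts cancel x_l; a source part at l would put l strictly below
   an element of fmax x, contradicting the maximality of l. *)
move=> x_l; rewrite /= /addrel_val.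
under eq_bigr do rewrite telemE.
rewrite sumrB -fmax_sum // big1_In ?sub0r ?subrr // => t ts_t.
have [kj /fmaxP [x_j _]] := ts_max t ts_t.
rewrite inj_neq //; apply: contraTneq kj => ->.
by have /fmaxP [_ l_max] := x_l; apply/negP/l_max.
Qed.

Lemma addrel_set_lt : set_lt (supp x') (supp x).
Proof.
move=> l x'_l.
have l_fmax : l \notin fmax x by apply: contraNN x'_l => /addrel_fmax ->.
have [x_l|x_l] := eqVneq (dval x l) 0; last exact: below_fmax x_l l_fmax.
move: x'_l; rewrite /supp /= /addrel_val x_l add0r.
move=> /sumr_neq0_In [t ts_t /telem_neq0 [->|l_j]].
  by have [kj /fmaxP [x_j _]] := ts_max t ts_t; exists (tag t).2.
by have [_ j_fmax] := ts_max t ts_t; rewrite l_j j_fmax in l_fmax.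
Qed.

End Reduction.
Arguments fmax_triples_lt {R d P F i x ts}.
Arguments addrel_set_lt {R d P F i x ts}.

Lemma exists_reduction_step {R : comPzRingType} {d : Order.disp_t} {P : porderType d}
    {F : pfunctor R P} {i : P} (x : dsum F i) :
  pseudo_projective F i -> dsum_eval x = 0 ->
  exists x', dsum_eval x' = 0 /\ reduction_step x x'.
Proof.
move=> pp x0.
have im_fmax j : j \in fmax x -> inImF (dval x j).
  move=> /fmaxP [x_j j_max]; apply: (pp (fsupp x)) => [k /fsupp_lt /ltW //| | | k].
  - by rewrite -(dsum_evalE (x := x)) // => k; rewrite in_fsupp.
  - by rewrite in_fsupp.
  - by rewrite in_fsupp; exact: j_max.
have [ts [ts_max fmax_sum]] := inImF_collect F _ _ (fset_uniq (fmax x)) im_fmax.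
exists (dsum_addrel F i x ts (fmax_triples_lt ts_max)).
split; first by rewrite dsum_eval_addrel.
split; last by split; [exact: colim_eq_addrel | exact: addrel_set_lt fmax_sum].
exists ts; split; last exact: addrelB.
by move=> t /ts_max [kj /fmaxP].
Qed.

Theorem lemma6p1 (R : comPzRingType) (d : Order.disp_t) (P : porderType d)
    (F : pfunctor R P) (i : P) (x : dsum F i) :
  dcc P -> pseudo_projective F i -> dsum_eval x = 0 ->
  exists xs : nat -> dsum F i,
    (forall j, dval (xs 0%N) j = dval x j) /\
    (forall n : nat,
        dsum_eval (xs n) = 0 /\
        (exists ys : seq (triple F),
            (forall t, Stdlib.Lists.List.In t ys ->
               (tag t).1 < (tag t).2 /\ is_max (supp (xs n)) (tag t).2) /\
            (forall l, dval (xs n.+1) l - dval (xs n) l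
                       = \sum_(t <- ys) telem t l)) /\
        colim_eq (xs n.+1) (xs n) /\
        set_lt (supp (xs n.+1)) (supp (xs n))) /\
    (exists N : nat, (0 < N)%N /\
       forall (n : nat) (j : P), (N <= n)%N -> j < i -> dval (xs n) j = 0).
Proof.
move=> dccP pp x0.
have [xs [xs0 steps]] := dependent_choice (fun y => exists_reduction_step y pp) x x0.
exists xs; split; first by rewrite xs0.
split; first exact: steps.
have [N fsupp0] := dominated_chain_vanishes (fun n => fsupp (xs n)) dccP
  (fun n => set_lt_dominated (steps n).2.2.2).
exists N.+1; split=> // n j /ltnW Nn _.
exact: fsupp_eq0 (fsupp0 n Nn) j.
Qed.
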